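(* Let $p\in\mathcal M_1^+$. If $\limsup_{k\to\infty}\sqrt[k]{p_k}<1$, then all coefficients $a(p)_k=\frac{1}{k+1}\sum_{\ell\ge k}\binom{\ell}{k}p_\ell$ are finite and $a(p)\in X_{\alpha,\delta}$ with $\alpha=a(p)_1=\frac12 m=\frac12\sum_{k\ge0}k\,p_k$ and some $\delta$. Conversely, if $a(p)\in X_{\alpha,\delta}$ for some $\alpha,\delta$, then $\limsup_{k\to\infty}\sqrt[k]{p_k}<1$.
   Context: $\mathcal M_1^+$ is the set of probability measures on $\mathbb N_0$, identified with nonnegative sequences summing to $1$. For $0<\alpha\le\delta<\infty$, $X_{\alpha,\delta}$ is the set of real sequences $a=(a_k)_{k\ge0}$ with $a_0=1$, $a_1=\alpha$, $0\le a_k\le\delta^k$ for $k\ge2$. *)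

From Stdlib Require Import Reals.
From Coquelicot Require Import Coquelicot.
Open Scope R_scope.

Definition binom (l k : nat) : R := Binomial.C l k.

Definition is_prob (p : nat -> R) : Prop :=
  (forall k, 0 <= p k) /\ is_series p 1.

Definition kroot (k : nat) (x : R) : R :=
  if Req_EM_T x 0 then 0 else Rpower x (/ INR k).

(** Terms of the series defining a(p)_k : j |-> binom (k+j) k * p (k+j),
    i.e. the sum over l >= k of binom l k * p l. *)
Definition aterm (p : nat -> R) (k : nat) : nat -> R :=
  fun j => binom (k + j)%nat k * p (k + j)%nat.

(** a(p)_k = 1/(k+1) * sum_{l >= k} binom l k p_l  (meaningful when the series converges). *)
Definition a_of (p : nat -> R) (k : nat) : R :=
  / INR (k + 1)%nat * Series (aterm p k).

Definition in_X (alpha delta : R) (a : nat -> R) : Prop :=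
  0 < alpha /\ alpha <= delta /\
  a 0%nat = 1 /\ a 1%nat = alpha /\
  (forall k, (2 <= k)%nat -> 0 <= a k /\ a k <= delta ^ k).

From Stdlib Require Import Reals Lra Lia.
From Coquelicot Require Import Coquelicot.
Open Scope R_scope.

(* Both directions compare p with a geometric sequence.  If p_l <= K r^l with
   r < 1, the Bernstein bound binom (k+j) k s^k (1-s)^j <= 1, taken with
   s = (1-r)/2, dominates the series of a(p)_k by a geometric series in j and
   gives a(p)_k <= C R^k.  Conversely, a(p)_k <= delta^k bounds every single
   term binom L k p_L by (k+1) delta^k, and summing over k against t^k with
   t = 1/(2 delta) gives p_L (1+t)^L <= sum_i (i+1) 2^-i <= 4. *)

Lemma sum_f_R0_ge_term (f : nat -> R) n i :
  (forall j, 0 <= f j) -> (i <= n)%nat -> f i <= sum_f_R0 f n.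
Proof.
  intros Hf Hi. induction n as [|n IHn].
  - replace i with 0%nat by lia. simpl; lra.
  - simpl. destruct (Nat.eq_dec i (S n)) as [->|Hne].
    + assert (0 <= sum_f_R0 f n) by (apply cond_pos_sum; auto). lra.
    + specialize (IHn ltac:(lia)). specialize (Hf (S n)). lra.
Qed.

Lemma Series_ge_term (a : nat -> R) n :
  (forall j, 0 <= a j) -> ex_series a -> a n <= Series a.
Proof.
  intros Ha [l Hl]. rewrite (is_series_unique _ _ Hl).
  apply is_series_Reals in Hl.
  apply Rle_trans with (sum_f_R0 a n); [apply sum_f_R0_ge_term; auto|].
  apply sum_incr; auto.
Qed.

Lemma Series_ge0 (a : nat -> R) : (forall j, 0 <= a j) -> ex_series a -> 0 <= Series a.
Proof. intros Ha Hex. apply Rle_trans with (a 0%nat); auto. apply Series_ge_term; auto. Qed.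

Lemma sum_succ_mul_half_pow L :
  sum_f_R0 (fun i => INR (i + 1) * (/ 2) ^ i) L = 4 - (INR L + 3) * (/ 2) ^ L.
Proof.
  induction L as [|L IHL]; [simpl; field|].
  rewrite tech5, IHL, S_INR, plus_INR, S_INR. simpl. field.
Qed.

Lemma binom_ge0 n k : 0 <= binom n k.
Proof.
  unfold binom, Binomial.C. apply Rmult_le_pos; [apply pos_INR|].
  left; apply Rinv_0_lt_compat, Rmult_lt_0_compat; apply INR_fact_lt_0.
Qed.

Lemma binom_0 n : binom n 0 = 1.
Proof. apply C_n_0. Qed.

Lemma binom_S_1 n : binom (S n) 1 = INR (S n).
Proof.
  unfold binom. rewrite (pascal_step3 (S n) 0), C_n_0 by lia.
  replace (S n - 0)%nat with (S n) by lia. simpl INR at 2. field.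
Qed.

(* One term of the binomial expansion of (s + (1 - s))^(k+j) = 1. *)
Lemma binom_pow_le1 s k j : 0 < s < 1 -> binom (k + j) k * s ^ k * (1 - s) ^ j <= 1.
Proof.
  intros Hs. unfold binom.
  assert (Hsum := binomial s (1 - s) (k + j)).
  replace (s + (1 - s)) with 1 in Hsum by ring. rewrite pow1 in Hsum.
  replace j with (k + j - k)%nat at 2 by lia.
  eapply Rle_trans; [|right; symmetry; exact Hsum].
  apply (sum_f_R0_ge_term (fun i => Binomial.C (k + j) i * s ^ i * (1 - s) ^ (k + j - i))).
  - intro i. apply Rmult_le_pos; [apply Rmult_le_pos; [apply binom_ge0|]|];
      apply pow_le; lra.
  - lia.
Qed.

Lemma kroot_ge0 n x : 0 <= kroot n x.
Proof. unfold kroot. destruct (Req_EM_T x 0); [lra|]. left; apply exp_pos. Qed.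

Lemma pow_kroot n x : (1 <= n)%nat -> 0 < x -> kroot n x ^ n = x.
Proof.
  intros Hn Hx. unfold kroot. destruct (Req_EM_T x 0); [lra|].
  rewrite <- Rpower_pow by apply exp_pos.
  rewrite Rpower_mult, Rinv_l by (apply not_0_INR; lia). apply Rpower_1; auto.
Qed.

Lemma le_pow_of_kroot_le n x r :
  (1 <= n)%nat -> 0 <= x -> kroot n x <= r -> x <= r ^ n.
Proof.
  intros Hn Hx Hr. assert (0 <= r) by (eapply Rle_trans; [apply kroot_ge0|exact Hr]).
  destruct Hx as [Hx|<-]; [|apply pow_le; auto].
  rewrite <- (pow_kroot n x) by auto. apply pow_incr. split; [apply kroot_ge0|auto].
Qed.

Lemma kroot_le_of_le_pow n x r :
  (1 <= n)%nat -> 0 < r -> 0 <= x <= r ^ n -> kroot n x <= r.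
Proof.
  intros Hn Hr [Hx0 Hxr]. unfold kroot. destruct (Req_EM_T x 0); [lra|].
  assert (HnR : 0 < INR n) by (apply lt_0_INR; lia).
  apply Rle_trans with (Rpower (r ^ n) (/ INR n)).
  - apply Rle_Rpower_l; [left; apply Rinv_0_lt_compat; auto | lra].
  - rewrite <- Rpower_pow, Rpower_mult, Rinv_r, Rpower_1 by lra. lra.
Qed.

Lemma LimSup_lt1_eventually (u : nat -> R) : Rbar_lt (LimSup_seq u) 1 ->
  exists r N, 0 < r < 1 /\ forall n, (N <= n)%nat -> u n < r.
Proof.
  unfold LimSup_seq; destruct (ex_LimSup_seq u) as [l Hl]; simpl.
  destruct l as [l| |]; simpl in *; intros H; [|contradiction|].
  - assert (He : 0 < (1 - l) / 2) by lra.
    destruct (Hl (mkposreal _ He)) as [_ [N HN]]; simpl in HN.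
    exists (Rmax (1/2) (l + (1 - l) / 2)), N. split.
    + split; [apply Rlt_le_trans with (1/2); [lra|apply Rmax_l]|].
      apply Rmax_lub_lt; lra.
    + intros n Hn. eapply Rlt_le_trans; [apply HN; auto|apply Rmax_r].
  - destruct (Hl (1/2)) as [N HN]. exists (1/2), N. split; [lra|auto].
Qed.

Lemma LimSup_lt1_of_eventually_le (u : nat -> R) c N :
  c < 1 -> (forall n, (N <= n)%nat -> u n <= c) -> Rbar_lt (LimSup_seq u) 1.
Proof.
  intros Hc Hu.
  assert (Hle : Rbar_le (LimSup_seq u) (LimSup_seq (fun _ => c))).
  { apply LimSup_le. exists N. exact Hu. }
  rewrite (is_LimSup_seq_unique _ _ (is_LimSup_seq_const c)) in Hle.
  destruct (LimSup_seq u); simpl in *; auto; lra.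
Qed.

Lemma geometric_bound_of_LimSup_kroot_lt1 (u : nat -> R) :
  (forall n, 0 <= u n) -> Rbar_lt (LimSup_seq (fun n => kroot n (u n))) 1 ->
  exists r K, 0 < r < 1 /\ 0 <= K /\ forall n, u n <= K * r ^ n.
Proof.
  intros Hu Hlim. destruct (LimSup_lt1_eventually _ Hlim) as (r & N & Hr & HN).
  set (M := sum_f_R0 (fun i => u i / r ^ i) N).
  assert (HM : forall i, (i <= N)%nat -> u i / r ^ i <= M).
  { intros i Hi. apply (sum_f_R0_ge_term (fun i => u i / r ^ i)); auto.
    intro j. apply Rdiv_le_0_compat; auto. apply pow_lt; lra. }
  assert (HM0 : 0 <= M) by (apply Rle_trans with (u 0%nat / r ^ 0);
      [apply Rdiv_le_0_compat; [auto|apply pow_lt; lra] | apply HM; lia]).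
  exists r, (1 + M). split; [auto|split; [lra|]]. intros n.
  assert (Hrn : 0 < r ^ n) by (apply pow_lt; lra).
  destruct (Compare_dec.le_lt_dec n N) as [Hn|Hn].
  - specialize (HM n Hn). apply Rle_trans with (M * r ^ n); [|nra].
    apply Rmult_le_reg_r with (/ r ^ n); [apply Rinv_0_lt_compat; lra|].
    rewrite Rmult_assoc, Rinv_r by lra. unfold Rdiv in HM. lra.
  - assert (u n <= r ^ n) by (apply le_pow_of_kroot_le; auto; try lia; left; apply HN; lia).
    nra.
Qed.

Lemma LimSup_kroot_lt1_of_geometric_bound (u : nat -> R) C q :
  (forall n, 0 <= u n) -> 0 < q < 1 -> (forall n, u n <= C * q ^ n) ->
  Rbar_lt (LimSup_seq (fun n => kroot n (u n))) 1.
Proof.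
  intros Hu Hq HuC.
  assert (HC : 0 <= C) by (specialize (HuC 0%nat); specialize (Hu 0%nat); simpl in *; lra).
  set (q' := (1 + q) / 2).
  assert (Hq' : q < q' < 1) by (unfold q'; lra).
  assert (Hratio : 0 <= q / q' < 1).
  { split; [apply Rdiv_le_0_compat; lra|].
    apply Rmult_lt_reg_r with q'; [lra|]. unfold Rdiv. rewrite Rmult_assoc, Rinv_l; lra. }
  destruct (pow_lt_1_zero (q / q')) with (y := / (C + 1)) as [N HN];
    [rewrite Rabs_pos_eq; lra | apply Rinv_0_lt_compat; lra |].
  apply (LimSup_lt1_of_eventually_le _ q' (max N 1)); [lra|]. intros n Hn.
  apply kroot_le_of_le_pow; [lia|lra|split; auto].
  specialize (HN n ltac:(lia)). rewrite Rabs_pos_eq in HN by (apply pow_le; lra).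
  assert (Hsplit : q ^ n = (q / q') ^ n * q' ^ n)
    by (rewrite <- Rpow_mult_distr; f_equal; field; lra).
  assert (HCsmall : C * (q / q') ^ n <= 1).
  { apply Rmult_lt_compat_l with (r := C + 1) in HN; [|lra].
    rewrite Rinv_r in HN by lra. assert (0 <= (q / q') ^ n) by (apply pow_le; lra). nra. }
  assert (0 < q' ^ n) by (apply pow_lt; lra).
  specialize (HuC n). rewrite Hsplit in HuC. nra.
Qed.

Lemma aterm_ge0 p k j : (forall l, 0 <= p l) -> 0 <= aterm p k j.
Proof. intros Hp. apply Rmult_le_pos; [apply binom_ge0|auto]. Qed.

Lemma aterm_0 p j : aterm p 0 j = p j.
Proof. unfold aterm. rewrite binom_0. simpl. ring. Qed.

Lemma aterm_1 p j : aterm p 1 j = INR (S j) * p (S j).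
Proof. unfold aterm. simpl plus. rewrite binom_S_1. reflexivity. Qed.

Lemma Series_aterm_eq p k : Series (aterm p k) = INR (k + 1) * a_of p k.
Proof. unfold a_of. field. apply not_0_INR. lia. Qed.

Lemma aterm_le_geometric p K r s k j :
  0 < r -> 0 < s < 1 -> 0 <= K -> (forall l, p l <= K * r ^ l) ->
  aterm p k j <= K * (r / s) ^ k * (r / (1 - s)) ^ j.
Proof.
  intros Hr Hs HK Hp. unfold aterm.
  assert (HA : 0 < s ^ k * (1 - s) ^ j) by (apply Rmult_lt_0_compat; apply pow_lt; lra).
  assert (Hbinom : binom (k + j) k <= / (s ^ k * (1 - s) ^ j)).
  { apply Rmult_le_reg_r with (s ^ k * (1 - s) ^ j); auto.
    rewrite Rinv_l by lra. rewrite <- Rmult_assoc. apply binom_pow_le1; auto. }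
  assert (Hrkj : 0 <= K * r ^ (k + j)) by (apply Rmult_le_pos; auto; apply pow_le; lra).
  replace (K * (r / s) ^ k * (r / (1 - s)) ^ j)
    with (/ (s ^ k * (1 - s) ^ j) * (K * r ^ (k + j))).
  2:{ unfold Rdiv. rewrite pow_add, !Rpow_mult_distr, !pow_inv, Rinv_mult. ring. }
  apply Rle_trans with (binom (k + j) k * (K * r ^ (k + j))).
  - apply Rmult_le_compat_l; [apply binom_ge0|auto].
  - apply Rmult_le_compat_r; auto.
Qed.

(* The choice s = (1 - r) / 2 makes the ratio r / (1 - s) = 2 r / (1 + r) less than 1. *)
Lemma Series_aterm_geometric p r K :
  (forall l, 0 <= p l) -> 0 < r < 1 -> 0 <= K -> (forall l, p l <= K * r ^ l) ->
  exists C R, 0 <= R /\ forall k, ex_series (aterm p k) /\ Series (aterm p k) <= C * R ^ k.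
Proof.
  intros Hp Hr HK HpK.
  set (s := (1 - r) / 2). set (q := r / (1 - s)).
  assert (Hs : 0 < s < 1) by (unfold s; lra).
  assert (Hq : 0 <= q < 1).
  { unfold q. split; [apply Rdiv_le_0_compat; lra|].
    apply Rmult_lt_reg_r with (1 - s); [lra|]. unfold Rdiv.
    rewrite Rmult_assoc, Rinv_l by lra. unfold s; lra. }
  assert (Hgeom : forall k, is_series (fun j => K * (r / s) ^ k * q ^ j) (K * (r / s) ^ k * / (1 - q))).
  { intros k. apply (is_series_scal_l (K * (r / s) ^ k) (fun j => q ^ j)).
    apply is_series_geom. rewrite Rabs_pos_eq; lra. }
  assert (Hdom : forall k j, 0 <= aterm p k j <= K * (r / s) ^ k * q ^ j).
  { intros k j. split; [apply aterm_ge0; auto | apply aterm_le_geometric; auto; lra]. }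
  assert (Hex : forall k, ex_series (aterm p k)).
  { intros k. apply (@ex_series_le R_AbsRing R_CompleteNormedModule _
      (fun j => K * (r / s) ^ k * q ^ j)); [|eexists; apply Hgeom].
    intros j. change (norm (aterm p k j)) with (Rabs (aterm p k j)).
    rewrite Rabs_pos_eq; apply Hdom. }
  exists (K / (1 - q)), (r / s). split; [apply Rdiv_le_0_compat; lra|].
  intros k. split; auto.
  replace (K / (1 - q) * (r / s) ^ k) with (K * (r / s) ^ k * / (1 - q)) by (unfold Rdiv; ring).
  rewrite <- (is_series_unique _ _ (Hgeom k)).
  apply Series_le; [apply Hdom | eexists; apply Hgeom].
Qed.

Lemma ex_series_mul_id p : ex_series (aterm p 1) -> ex_series (fun k => INR k * p k).
Proof.
  intros Hex. apply (proj2 (ex_series_incr_1 _)).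
  apply (ex_series_ext (aterm p 1)); auto. intro j. apply aterm_1.
Qed.

Lemma a_of_1 p : ex_series (aterm p 1) -> a_of p 1 = / 2 * Series (fun k => INR k * p k).
Proof.
  intros Hex. unfold a_of.
  rewrite (Series_incr_1 (fun k => INR k * p k)) by (apply ex_series_mul_id; auto).
  simpl INR at 2.
  rewrite Rmult_0_l, Rplus_0_l, (Series_ext _ _ (aterm_1 p)).
  f_equal.
Qed.

Lemma a_of_0 p : is_prob p -> a_of p 0 = 1.
Proof.
  intros [_ Hp]. unfold a_of. rewrite (Series_ext _ p) by apply aterm_0.
  rewrite (is_series_unique _ _ Hp). simpl. field.
Qed.

(* a(p)_1 >= (1/2) sum_{l >= 1} p_l = (1 - p_0) / 2. *)
Lemma a_of_1_pos p : is_prob p -> p 0%nat < 1 -> ex_series (aterm p 1) -> 0 < a_of p 1.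
Proof.
  intros [Hp Hsum] Hp0 Hex. unfold a_of.
  apply Rmult_lt_0_compat; [apply Rinv_0_lt_compat; simpl; lra|].
  apply Rlt_le_trans with (Series (fun j => p (S j))).
  - pose proof (is_series_unique _ _ Hsum) as E.
    rewrite Series_incr_1 in E by (eexists; eauto). lra.
  - apply Series_le; auto. intros j. split; auto. rewrite aterm_1, S_INR.
    pose proof (pos_INR j). specialize (Hp (S j)). nra.
Qed.

Lemma in_X_a_of p C R :
  is_prob p -> p 0%nat < 1 -> 0 <= R ->
  (forall k, ex_series (aterm p k)) -> (forall k, Series (aterm p k) <= C * R ^ k) ->
  exists delta, in_X (a_of p 1) delta (a_of p).
Proof.
  intros Hprob Hp0 HR Hex HS. pose proof (proj1 Hprob) as Hp.
  set (D := Rmax 1 C * R).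
  assert (HD : 0 <= D) by (apply Rmult_le_pos; [apply Rle_trans with 1; [lra|apply Rmax_l]|auto]).
  assert (Ha : forall k, (1 <= k)%nat -> 0 <= a_of p k <= D ^ k).
  { intros k Hk.
    assert (HS0 : 0 <= Series (aterm p k)) by (apply Series_ge0; auto; intro; apply aterm_ge0; auto).
    assert (Hk1 : 1 <= INR (k + 1)) by (rewrite plus_INR; simpl; pose proof (pos_INR k); lra).
    assert (Hak : 0 <= a_of p k <= Series (aterm p k)).
    { rewrite (Series_aterm_eq p k) in *. nra. }
    assert (HCk : C <= Rmax 1 C ^ k).
    { apply Rle_trans with (Rmax 1 C); [apply Rmax_r|].
      rewrite <- (pow_1 (Rmax 1 C)) at 1. apply Rle_pow; [apply Rmax_l|lia]. }
    assert (0 <= R ^ k) by (apply pow_le; auto).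
    split; [apply Hak|]. unfold D. rewrite Rpow_mult_distr.
    apply Rle_trans with (C * R ^ k); [specialize (HS k); lra|].
    apply Rmult_le_compat_r; auto. }
  exists (Rmax (a_of p 1) D). split; [|split; [|split; [|split]]].
  - apply a_of_1_pos; auto.
  - apply Rmax_l.
  - apply a_of_0; auto.
  - reflexivity.
  - intros k Hk. split; [apply Ha; lia|].
    apply Rle_trans with (D ^ k); [apply Ha; lia|].
    apply pow_incr. split; [auto|apply Rmax_r].
Qed.

Lemma in_X_le_pow alpha delta (a : nat -> R) :
  in_X alpha delta a -> 0 < delta /\ forall k, a k <= delta ^ k.
Proof.
  intros (Halpha & Hdelta & Ha0 & Ha1 & Ha). split; [lra|].
  intros [|[|k]]; [rewrite Ha0; simpl; lra | rewrite Ha1; simpl; lra | apply Ha; lia].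
Qed.

Lemma binom_mul_le_Series_aterm p L k :
  (forall l, 0 <= p l) -> ex_series (aterm p k) -> (k <= L)%nat ->
  binom L k * p L <= Series (aterm p k).
Proof.
  intros Hp Hex HkL.
  replace (binom L k * p L) with (aterm p k (L - k)).
  - apply Series_ge_term; auto. intro; apply aterm_ge0; auto.
  - unfold aterm. replace (k + (L - k))%nat with L by lia. reflexivity.
Qed.

(* Expand x (1 + t)^L binomially with t = 1 / (2 delta), so that t^k delta^k = 2^-k. *)
Lemma le_geometric_of_binom_bounds x delta L :
  0 < delta -> (forall k, (k <= L)%nat -> binom L k * x <= INR (k + 1) * delta ^ k) ->
  x <= 4 * (/ (1 + / (2 * delta))) ^ L.
Proof.
  intros Hd Hx. set (t := / (2 * delta)).
  assert (Ht : 0 < t) by (apply Rinv_0_lt_compat; lra).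
  assert (Htd : t * delta = / 2) by (unfold t; field; lra).
  assert (Hexp : x * (1 + t) ^ L <= 4).
  { rewrite Rplus_comm, binomial, scal_sum.
    apply Rle_trans with (sum_f_R0 (fun i => INR (i + 1) * (/ 2) ^ i) L).
    - apply sum_Rle. intros i Hi. rewrite pow1, Rmult_1_r, <- Htd, Rpow_mult_distr.
      specialize (Hx i Hi). unfold binom in Hx.
      assert (0 <= t ^ i) by (apply pow_le; lra). nra.
    - rewrite sum_succ_mul_half_pow.
      assert (0 <= (INR L + 3) * (/ 2) ^ L)
        by (apply Rmult_le_pos; [pose proof (pos_INR L); lra | apply pow_le; lra]).
      lra. }
  assert (HtL : 0 < (1 + t) ^ L) by (apply pow_lt; lra).
  rewrite pow_inv. apply Rmult_le_reg_r with ((1 + t) ^ L); auto.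
  rewrite Rmult_assoc, Rinv_l by lra. lra.
Qed.

Lemma geometric_bound_of_a_of_le_pow p delta :
  (forall l, 0 <= p l) -> 0 < delta ->
  (forall k, ex_series (aterm p k)) -> (forall k, a_of p k <= delta ^ k) ->
  exists q, 0 < q < 1 /\ forall L, p L <= 4 * q ^ L.
Proof.
  intros Hp Hd Hex Ha. exists (/ (1 + / (2 * delta))).
  assert (Ht : 0 < / (2 * delta)) by (apply Rinv_0_lt_compat; lra).
  split.
  - split; [apply Rinv_0_lt_compat; lra|].
    rewrite <- Rinv_1. apply Rinv_lt_contravar; lra.
  - intros L. apply le_geometric_of_binom_bounds; auto. intros k Hk.
    eapply Rle_trans; [apply binom_mul_le_Series_aterm; auto|].
    rewrite Series_aterm_eq. apply Rmult_le_compat_l; [apply pos_INR|auto].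
Qed.

Theorem proposition6 (p : nat -> R) (hp : is_prob p) :
  (Rbar_lt (LimSup_seq (fun k => kroot k (p k))) 1 ->
     (forall k, ex_series (aterm p k)) /\
     ex_series (fun k => INR k * p k) /\
     a_of p 1 = / 2 * Series (fun k => INR k * p k) /\
     (p 0%nat < 1 -> exists delta, in_X (a_of p 1) delta (a_of p)))
  /\
  (((forall k, ex_series (aterm p k)) /\
     exists alpha delta, in_X alpha delta (a_of p)) ->
     Rbar_lt (LimSup_seq (fun k => kroot k (p k))) 1).
Proof.
  pose proof (proj1 hp) as p_ge0. split.
  - intros Hlim.
    destruct (geometric_bound_of_LimSup_kroot_lt1 p p_ge0 Hlim) as (r & K & Hr & HK & HpK).
    destruct (Series_aterm_geometric p r K p_ge0 Hr HK HpK) as (C & R & HR & HS).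
    assert (Hex : forall k, ex_series (aterm p k)) by (intro k; apply HS).
    split; [exact Hex|]. split; [apply ex_series_mul_id, Hex|].
    split; [apply a_of_1, Hex|].
    intros Hp0. apply (in_X_a_of p C R); auto. intro k; apply HS.
  - intros [Hex (alpha & delta & HX)].
    destruct (in_X_le_pow _ _ _ HX) as [Hd Ha].
    destruct (geometric_bound_of_a_of_le_pow p delta p_ge0 Hd Hex Ha) as (q & Hq & HpL).
    exact (LimSup_kroot_lt1_of_geometric_bound p 4 q p_ge0 Hq HpL).
Qed.
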